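(* Let $R$ be a QNA with Goodearl–Yakimov elements $y_1,\ldots,y_N$. For all $i,j\in[1,N]$ with $i\neq j$, we have $y_iR\cap y_jR=y_iy_jR$.
   Context: ${\mathbb K}$ is a field of characteristic $0$. A quantum nilpotent algebra (QNA) is an iterated Ore extension $R={\mathbb K}[x_1][x_2;\sigma_2,\delta_2]\cdots[x_N;\sigma_N,\delta_N]$, where $R_k={\mathbb K}[x_1][x_2;\sigma_2,\delta_2]\cdots[x_k;\sigma_k,\delta_k]$ ($R_0={\mathbb K}$), $\sigma_k$ is a ${\mathbb K}$-automorphism and $\delta_k$ a $\sigma_k$-derivation of $R_{k-1}$, together with a torus $\mathcal H$ acting rationally by ${\mathbb K}$-automorphisms on $R$ with each $x_i$ an $\mathcal H$-eigenvector, such that: (i) $\sigma_k(x_j)=\lambda_{kj}x_j$ for $j<k$, with $\lambda_{kj}\in{\mathbb K}^*$; (ii) $\delta_k$ is locally nilpotent on $R_{k-1}$; (iii) for each $k$ there exist $h_k\in\mathcal H$ and $q_k\in{\mathbb K}^*$ not a root of unity such that $h_k$ acts on $R_{k-1}$ as $\sigma_k$ and $h_k\cdot x_k=q_kx_k$. The rank is $n=|\{k:\delta_k=0\}|$ and $\mathcal H=({\mathbb K}^* )^n$ is taken maximal. Homogeneous elements are the $\mathcal H$-eigenvectors. An element $u$ is normal if $uR=Ru$; a prime element is a nonzero normal $p$ with $pR$ a completely prime ideal. Goodearl–Yakimov elements: there is a surjective map $\mu:[1,N]\to[1,n]$ with predecessor $p(k)=\max\{j<k:\mu(j)=\mu(k)\}$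 (or $-\infty$ if none) and successor $s(k)=\min\{j>k:\mu(j)=\mu(k)\}$ (or $+\infty$ if none), and homogeneous elements $y_1,\ldots,y_N\in R$, uniquely determined, with $y_k=x_k$ if $p(k)=-\infty$ and $y_k=y_{p(k)}x_k-c_k$ for some $c_k\in R_{k-1}$ otherwise, such that for every $k$ the set $\{y_j: j\le k,\ s(j)>k\}$ is, up to nonzero scalars, the set of homogeneous prime elements of $R_k$. The $y_i$ pairwise quasi-commute. *)

From HB Require Import structures.
From mathcomp Require Import all_boot all_order all_algebra.
Set Implicit Arguments. Unset Strict Implicit. Unset Printing Implicit Defensive.
Import GRing.Theory.
Local Open Scope ring_scope.

Section QNADefs.
Variables (K : fieldType) (R : algType K).

(* R_k : the K-subalgebra of R generated by x_1, ..., x_k (R_0 = K). *)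
Inductive gen_sub (x : nat -> R) (k : nat) : R -> Prop :=
| gen_const (c : K) : gen_sub x k (c%:A)
| gen_var (j : nat) : (1 <= j <= k)%N -> gen_sub x k (x j)
| gen_add (a b : R) : gen_sub x k a -> gen_sub x k b -> gen_sub x k (a + b)
| gen_mul (a b : R) : gen_sub x k a -> gen_sub x k b -> gen_sub x k (a * b).

Definition alg_auto_on (S : R -> Prop) (f : R -> R) : Prop :=
  (((forall a, S a -> S (f a))) /\ ((forall a b, S a -> S b -> f (a + b) = f a + f b)) /\ ((forall a b, S a -> S b -> f (a * b) = f a * f b)) /\ (f 1 = 1) /\ ((forall (c : K) a, S a -> f (c *: a) = c *: f a)) /\ ((forall a b, S a -> S b -> f a = f b -> a = b)) /\ ((forall b, S b -> exists a, S a /\ f a = b))).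

Definition sigma_derivation_on (S : R -> Prop) (s d : R -> R) : Prop :=
  (((forall a, S a -> S (d a))) /\ ((forall a b, S a -> S b -> d (a + b) = d a + d b)) /\ ((forall (c : K) a, S a -> d (c *: a) = c *: d a)) /\ ((forall a b, S a -> S b -> d (a * b) = s a * d b + d a * b))).

(* T = S[xk; s, d] (internal characterization of an Ore extension):
   s is an automorphism of S, d an s-derivation, xk r = s(r) xk + d(r),
   and T is a free left S-module with basis 1, xk, xk^2, ... *)
Definition ore_step (S T : R -> Prop) (xk : R) (s d : R -> R) : Prop :=
  ((alg_auto_on S s) /\ (sigma_derivation_on S s d) /\ ((forall r, S r -> xk * r = s r * xk + d r)) /\ ((forall t, T t -> exists (m : nat) (r : nat -> R),
            (forall i, S (r i)) /\ t = \sum_(i < m) r i * xk ^+ i)) /\ ((forall (m : nat) (r : nat -> R), (forall i, (i < m)%N -> S (r i)) ->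
          \sum_(i < m) r i * xk ^+ i = 0 -> forall i, (i < m)%N -> r i = 0))).

Definition torus_elt (n : nat) (h : 'I_n -> K) : Prop := forall l, h l != 0.

Definition torus_one (n : nat) : 'I_n -> K := fun _ => 1.
Definition torus_mul (n : nat) (h h' : 'I_n -> K) : 'I_n -> K :=
  fun l => h l * h' l.

Definition torus_action (n : nat) (act : ('I_n -> K) -> R -> R) : Prop :=
  (((forall h, torus_elt h -> alg_auto_on (fun _ => True) (act h))) /\ ((forall r, act (@torus_one n) r = r)) /\ ((forall h h', torus_elt h -> torus_elt h' ->
          forall r, act (torus_mul h h') r = act h (act h' r)))).

Definition homogeneous (n : nat) (act : ('I_n -> K) -> R -> R) (u : R) : Prop :=
  u != 0 /\ forall h, torus_elt h -> exists c : K, act h u = c *: u.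

Definition not_root_of_unity (q : K) : Prop :=
  q != 0 /\ forall m : nat, (0 < m)%N -> q ^+ m != 1.

Definition QNA (N n : nat) (x : nat -> R) (sigma delta : nat -> R -> R)
    (act : ('I_n -> K) -> R -> R) : Prop :=
  (((* iterated Ore extension R = K[x1][x2;s2,d2]...[xN;sN,dN] *)
   (forall r : R, gen_sub x N r)) /\ ((forall k, (1 <= k <= N)%N ->
      ore_step (gen_sub x k.-1) (gen_sub x k) (x k) (sigma k) (delta k))) /\ (
   (forall k j, (1 <= j)%N -> (j < k)%N -> (k <= N)%N ->
      exists lam : K, lam != 0 /\ sigma k (x j) = lam *: x j)) /\ (
   (forall k, (1 <= k <= N)%N -> forall r, gen_sub x k.-1 r ->
      exists m : nat, iter m (delta k) r = 0)) /\ ((* rational action of the torus H = (K^* )^n, the x_i being H-eigenvectors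
      (the eigencharacters of a rational torus action are monomial) *)
   torus_action act) /\ ((forall i, (1 <= i <= N)%N -> exists w : 'I_n -> int,
      forall h, torus_elt h -> act h (x i) = (\prod_(l < n) h l ^ w l) *: x i)) /\ (
   (forall k, (1 <= k <= N)%N -> exists (h : 'I_n -> K) (q : K),
      ((torus_elt h) /\ (not_root_of_unity q) /\ ((forall r, gen_sub x k.-1 r -> act h r = sigma k r)) /\ (act h (x k) = q *: x k)))) /\ ((* n is the rank: n = #{k : delta_k = 0} *)
   (exists s : seq nat, ((uniq s) /\ (size s = n) /\ (forall k, k \in s <-> ((1 <= k <= N)%N /\
                             forall r, gen_sub x k.-1 r -> delta k r = 0))))) /\ ((* H is maximal: it acts faithfully and every K-algebra automorphism of R
      rescaling each x_i by a nonzero scalar comes from H *)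
   ((forall h, torus_elt h -> (forall r, act h r = r) -> h = @torus_one n) /\
    (forall f, alg_auto_on (fun _ => True) f ->
      (forall i, (1 <= i <= N)%N -> exists c : K, c != 0 /\ f (x i) = c *: x i) ->
      exists h, torus_elt h /\ forall r, f r = act h r)))).

Definition normal_in (S : R -> Prop) (u : R) : Prop :=
  ((S u) /\ ((forall r, S r -> exists r', S r' /\ u * r = r' * u)) /\ ((forall r, S r -> exists r', S r' /\ r * u = u * r'))).

Definition in_right_ideal (S : R -> Prop) (u a : R) : Prop :=
  exists s, S s /\ a = u * s.

Definition prime_elt_in (S : R -> Prop) (u : R) : Prop :=
  ((u != 0) /\ (normal_in S u) /\ (~ in_right_ideal S u 1) /\ ((forall a b, S a -> S b -> in_right_ideal S u (a * b) ->
          in_right_ideal S u a \/ in_right_ideal S u b))).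

Definition GY_elements (N n : nat) (x : nat -> R) (act : ('I_n -> K) -> R -> R)
    (mu : nat -> nat) (y : nat -> R) : Prop :=
  (((forall k, (1 <= k <= N)%N -> (1 <= mu k <= n)%N)) /\ ((forall l, (1 <= l <= n)%N -> exists k, (1 <= k <= N)%N /\ mu k = l)) /\ ((forall k, (1 <= k <= N)%N -> homogeneous act (y k))) /\ (
   (forall k, (1 <= k <= N)%N ->
      (forall j, (1 <= j)%N -> (j < k)%N -> mu j <> mu k) -> y k = x k)) /\ (
   (forall k j, (1 <= j)%N -> (j < k)%N -> (k <= N)%N -> mu j = mu k ->
      (forall j', (j < j')%N -> (j' < k)%N -> mu j' <> mu k) ->
      exists c, gen_sub x k.-1 c /\ y k = y j * x k - c)) /\ ((* {y_j : j <= k, s(j) > k} is, up to scalars, the set of homogeneous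
      prime elements of R_k *)
   (forall k, (1 <= k <= N)%N ->
      (forall j, (1 <= j <= k)%N ->
         (forall j', (j < j' <= k)%N -> mu j' <> mu j) ->
         homogeneous act (y j) /\ prime_elt_in (gen_sub x k) (y j)) /\
      (forall u, homogeneous act u -> prime_elt_in (gen_sub x k) u ->
         exists j (c : K), (((1 <= j <= k)%N) /\ ((forall j', (j < j' <= k)%N -> mu j' <> mu j)) /\ (c != 0) /\ (u = c *: y j))))) /\ (
   (forall i j, (1 <= i <= N)%N -> (1 <= j <= N)%N ->
      exists alpha : K, alpha != 0 /\ y i * y j = alpha *: (y j * y i)))).

End QNADefs.

(* Say i < j.  In R_j the element y_j is prime, and it has degree one in x_j while
   y_i is a nonzero element of R_(j-1); since R_(j-1) is a domain, y_j cannot divide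
   y_i, so y_i r = y_j s forces r into y_j R_j.  This property lifts from R_k to the
   Ore extension R_(k+1) = R_k[x_(k+1); sigma, delta] by comparing coefficients in
   the free left R_k-basis of powers of x_(k+1), and thus holds in R = R_N.  The case
   i > j reduces to i < j because the y's quasi-commute. *)

From HB Require Import structures.
From mathcomp Require Import all_boot all_order all_algebra.
Import GRing.Theory.
Local Open Scope ring_scope.
From mathcomp Require Import zify.
Set Implicit Arguments. Unset Strict Implicit. Unset Printing Implicit Defensive.

Section OreExtension.
Variables (R : pzRingType) (S : R -> Prop) (x : R) (sg dl : R -> R).
Hypotheses (S0 : S 0) (SD : forall a b, S a -> S b -> S (a + b))
  (SM : forall a b, S a -> S b -> S (a * b)) (SN : forall a, S a -> S (- a))
  (Ssg : forall a, S a -> S (sg a)) (Sdl : forall a, S a -> S (dl a))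
  (mulx_coef : forall r, S r -> x * r = sg r * x + dl r).

Definition deg_lt d t :=
  exists r : nat -> R, (forall i, S (r i)) /\ t = \sum_(i < d) r i * x ^+ i.

Lemma deg_lt_ind (P : R -> Prop) d : P 0 -> (forall a b, P a -> P b -> P (a + b)) ->
  (forall r i, S r -> (i < d)%N -> P (r * x ^+ i)) -> forall t, deg_lt d t -> P t.
Proof.
move=> P0 PD Pm t [r [Sr ->]]; apply: big_ind => // k _; exact: Pm (ltn_ord k).
Qed.

Lemma deg_lt0 d : deg_lt d 0.
Proof. by exists (fun _ => 0); split => //; rewrite big1 // => i _; rewrite mul0r. Qed.

Lemma deg_ltD d a b : deg_lt d a -> deg_lt d b -> deg_lt d (a + b).
Proof.
move=> [r [Sr ->]] [r' [Sr' ->]]; exists (fun i => r i + r' i); split.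
  by move=> i; apply: SD.
by rewrite -big_split; apply: eq_bigr => i _; rewrite mulrDl.
Qed.

Lemma deg_lt_widen d e t : (d <= e)%N -> deg_lt d t -> deg_lt e t.
Proof.
move=> de [r [Sr ->]]; exists (fun i => if (i < d)%N then r i else 0); split.
  by move=> i; case: ifP.
rewrite (big_ord_widen e (fun i => r i * x ^+ i) de) big_mkcond /=.
by apply: eq_bigr => i _; case: ifP => //; rewrite mul0r.
Qed.

Lemma deg_lt_monomial d r i : S r -> (i < d)%N -> deg_lt d (r * x ^+ i).
Proof.
move=> Sr id; apply: (deg_lt_widen id); exists (fun k => if k == i then r else 0); split.
  by move=> k; case: ifP.
rewrite big_ord_recr /= eqxx big1 ?add0r // => k _.
by rewrite ltn_eqF ?ltn_ord // mul0r.
Qed.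

Lemma deg_lt_coef d r : S r -> (0 < d)%N -> deg_lt d r.
Proof. by move=> Sr d0; rewrite -[r]mulr1 -(expr0 x); apply: deg_lt_monomial. Qed.

Lemma deg_ltN d a : deg_lt d a -> deg_lt d (- a).
Proof.
move: a; apply: (deg_lt_ind (P := fun a => deg_lt d (- a))) => [|a1 b1 h1 h2|r i Sr id]; first by rewrite oppr0; apply: deg_lt0.
  by rewrite opprD; apply: deg_ltD.
by rewrite -mulNr; apply: deg_lt_monomial => //; apply: SN.
Qed.

Lemma deg_ltMl d u t : S u -> deg_lt d t -> deg_lt d (u * t).
Proof.
move=> Su; move: t; apply: (deg_lt_ind (P := fun t => deg_lt d (u * t))) => [|a b h1 h2|r i Sr id]; first by rewrite mulr0; apply: deg_lt0.
  by rewrite mulrDr; apply: deg_ltD.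
by rewrite mulrA; apply: deg_lt_monomial => //; apply: SM.
Qed.

Lemma deg_ltMXr d e t : deg_lt d t -> deg_lt (d + e) (t * x ^+ e).
Proof.
move: t; apply: (deg_lt_ind (P := fun t => deg_lt (d + e) (t * x ^+ e))) => [|a b h1 h2|r i Sr id]; first by rewrite mul0r; apply: deg_lt0.
  by rewrite mulrDl; apply: deg_ltD.
by rewrite -mulrA -exprD; apply: deg_lt_monomial => //; rewrite ltn_add2r.
Qed.

Lemma deg_ltXl d t : deg_lt d t -> deg_lt d.+1 (x * t).
Proof.
move: t; apply: (deg_lt_ind (P := fun t => deg_lt d.+1 (x * t))) => [|a b h1 h2|r i Sr id]; first by rewrite mulr0; apply: deg_lt0.
  by rewrite mulrDr; apply: deg_ltD.
rewrite mulrA mulx_coef // mulrDl -mulrA -exprS.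
by apply: deg_ltD; apply: deg_lt_monomial => //; [apply: Ssg | apply: Sdl | apply: ltnW].
Qed.

Lemma S_iter_sg m u : S u -> S (iter m sg u).
Proof. by move=> Su; elim: m => //= m IH; apply: Ssg. Qed.

Lemma mulXn_coef m u : S u ->
  exists l, deg_lt m l /\ x ^+ m * u = iter m sg u * x ^+ m + l.
Proof.
move=> Su; elim: m => [|m [l [Ll E]]].
  by exists 0; split; [apply: deg_lt0 | rewrite expr0 mulr1 mul1r addr0].
exists (dl (iter m sg u) * x ^+ m + x * l); split.
  apply: deg_ltD; last exact: deg_ltXl.
  by apply: deg_lt_monomial => //; apply/Sdl/S_iter_sg.
rewrite exprS -mulrA E mulrDr mulrA mulx_coef; last exact: S_iter_sg.
by rewrite mulrDl -(mulrA _ x) -exprS addrA.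
Qed.

Lemma mul_monomial r r' i i' : S r -> S r' -> exists l, deg_lt (i + i') l /\
  (r * x ^+ i) * (r' * x ^+ i') = (r * iter i sg r') * x ^+ (i + i') + l.
Proof.
move=> Sr Sr'; have [l [Ll E]] := mulXn_coef i Sr'.
exists (r * (l * x ^+ i')); split; first by apply: deg_ltMl => //; apply: deg_ltMXr.
by rewrite -mulrA (mulrA (x ^+ i)) E mulrDl mulrDr -mulrA -exprD mulrA.
Qed.

Lemma deg_ltM d e f a b : deg_lt d a -> deg_lt e b ->
  (forall i i', (i < d)%N -> (i' < e)%N -> (i + i' < f)%N) -> deg_lt f (a * b).
Proof.
move=> La Lb def; move: a La; apply: (deg_lt_ind (P := fun a => deg_lt f (a * b))) => [|a1 b1 h1 h2|r i Sr id].
- by rewrite mul0r; apply: deg_lt0.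
- by rewrite mulrDl; apply: deg_ltD.
move: b Lb; apply: (deg_lt_ind (P := fun b => deg_lt f (r * x ^+ i * b))) => [|a1 b1 h1 h2|r' i' Sr' i'e].
- by rewrite mulr0; apply: deg_lt0.
- by rewrite mulrDr; apply: deg_ltD.
have [l [Ll ->]] := mul_monomial i i' Sr Sr'.
apply: deg_ltD; first by apply: deg_lt_monomial; [apply/SM/S_iter_sg | apply: def].
by apply: deg_lt_widen Ll; apply/ltnW/def.
Qed.

Lemma mul_lead s s' d e l l' : S s -> S s' -> deg_lt d l -> deg_lt e l' ->
  exists l'', deg_lt (d + e) l'' /\
  (s * x ^+ d + l) * (s' * x ^+ e + l') = (s * iter d sg s') * x ^+ (d + e) + l''.
Proof.
move=> Ss Ss' Ll Ll'; have [l1 [Ll1 E]] := mul_monomial d e Ss Ss'.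
have Ld : deg_lt d.+1 (s * x ^+ d) by apply: deg_lt_monomial.
have Le : deg_lt e.+1 (s' * x ^+ e) by apply: deg_lt_monomial.
exists (l1 + (s * x ^+ d * l' + (l * (s' * x ^+ e) + l * l'))); split.
  apply: deg_ltD => //; apply: deg_ltD; last apply: deg_ltD.
  - by apply: deg_ltM Ld Ll' _ => i i' /=; lia.
  - by apply: deg_ltM Ll Le _ => i i' /=; lia.
  - by apply: deg_ltM Ll Ll' _ => i i' /=; lia.
by rewrite mulrDl !mulrDr E -!addrA.
Qed.

Hypothesis free : forall (m : nat) (r : nat -> R), (forall i, (i < m)%N -> S (r i)) ->
  \sum_(i < m) r i * x ^+ i = 0 -> forall i, (i < m)%N -> r i = 0.

Lemma lead_coef_eq0 s d l : S s -> deg_lt d l -> s * x ^+ d + l = 0 -> s = 0.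
Proof.
move=> Ss [r [Sr ->]] E.
have := free (m := d.+1) (r := fun k => if k == d then s else r k) _ _ (ltnSn d).
rewrite eqxx; apply; first by move=> i _; case: ifP.
rewrite big_ord_recr /= eqxx -[RHS]E addrC; congr (_ + _).
by apply: eq_bigr => i _; rewrite ltn_eqF.
Qed.

Lemma mulr_sum_coef u m (c : nat -> R) :
  u * (\sum_(i < m) c i * x ^+ i) = \sum_(i < m) (u * c i) * x ^+ i.
Proof. by rewrite big_distrr /=; apply: eq_bigr => i _; rewrite mulrA. Qed.

Lemma sum_coef_in_mulr u m (c : nat -> R) :
  (forall i, (i < m)%N -> exists t, S t /\ c i = u * t) ->
  exists t, deg_lt m t /\ \sum_(i < m) c i * x ^+ i = u * t.
Proof.
elim: m => [|m IH] H.
  by exists 0; split; [apply: deg_lt0 | rewrite big_ord0 mulr0].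
have [t0 [Lt0 E0]] := IH (fun i lt => H i (ltnW lt)).
have [t1 [St1 E1]] := H m (ltnSn m).
exists (t0 + t1 * x ^+ m); split.
  by apply: deg_ltD; [apply: deg_lt_widen Lt0 | apply: deg_lt_monomial].
by rewrite big_ord_recr /= E0 E1 mulrDr mulrA.
Qed.

Variable T : R -> Prop.
Hypothesis T_coef : forall t, T t -> exists (m : nat) (r : nat -> R),
  (forall i, S (r i)) /\ t = \sum_(i < m) r i * x ^+ i.

Lemma T_deg_lt t : T t -> exists m, deg_lt m t.
Proof. by move=> /T_coef [m [r [Sr ->]]]; exists m, r. Qed.

(* Comparing coefficients: [u r = v s] in [T] is [u r_i = v s_i] in [S] for all [i]. *)
Lemma ore_mulr_cap u v w : S u -> S v ->
  (forall r s, S r -> S s -> u * r = v * s -> exists t, S t /\ u * r = w * t) ->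
  forall r s, T r -> T s -> u * r = v * s -> exists m t, deg_lt m t /\ u * r = w * t.
Proof.
move=> Su Sv cap r s /T_deg_lt [m Lr] /T_deg_lt [m' Ls] E.
have [a [Sa Ea]] := deg_lt_widen (leq_addr m' m) Lr.
have [b [Sb Eb]] := deg_lt_widen (leq_addl m m') Ls.
have coefE i : (i < m + m')%N -> u * a i = v * b i.
  move=> lt; apply/eqP; rewrite -subr_eq0; apply/eqP.
  apply: (free (m := m + m') (r := fun i => u * a i - v * b i)) => // [k _|].
    by apply: SD; [apply: SM | apply/SN/SM].
  under eq_bigr do rewrite mulrBl.
  by rewrite sumrB -!mulr_sum_coef -Ea -Eb E subrr.
have [t [Lt Et]] := sum_coef_in_mulr (fun i lt => cap _ _ (Sa i) (Sb i) (coefE i lt)).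
by exists (m + m'), t; split => //; rewrite Ea mulr_sum_coef.
Qed.

Lemma T_lead_decomp t : T t -> t != 0 ->
  exists d s l, [/\ S s, s != 0, deg_lt d l & t = s * x ^+ d + l].
Proof.
move=> /T_coef [m [r [Sr ->]]]; elim: m => [|m IH]; first by rewrite big_ord0 eqxx.
rewrite big_ord_recr /=; case: (eqVneq (r m) 0) => [->|nz].
  by rewrite mul0r addr0 => /IH.
by exists m, (r m), (\sum_(i < m) r i * x ^+ i); split => //; [exists r | rewrite addrC].
Qed.

Hypotheses (sgD : forall a b, S a -> S b -> sg (a + b) = sg a + sg b)
  (sg_inj : forall a b, S a -> S b -> sg a = sg b -> a = b)
  (S_domain : forall a b, S a -> S b -> a * b = 0 -> a = 0 \/ b = 0).

Lemma sg0 : sg 0 = 0.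
Proof. by apply/eqP; rewrite -(addrI (sg 0) (_ : _ + 0 = _ + sg 0)) // addr0 -sgD // addr0. Qed.

Lemma iter_sg_eq0 m u : S u -> iter m sg u = 0 -> u = 0.
Proof.
move=> Su; elim: m => //= m IH E; apply: IH.
by apply: sg_inj; rewrite ?sg0 //; apply: S_iter_sg.
Qed.

Lemma lead_mul_neq0 d s s' : S s -> S s' -> s != 0 -> s' != 0 -> s * iter d sg s' != 0.
Proof.
move=> Ss Ss' ns ns'; apply/eqP => /(S_domain Ss (S_iter_sg d Ss')).
by case=> [/eqP|/(iter_sg_eq0 Ss')/eqP]; [rewrite (negbTE ns) | rewrite (negbTE ns')].
Qed.

Lemma ore_domain a b : T a -> T b -> a * b = 0 -> a = 0 \/ b = 0.
Proof.
move=> Ta Tb ab0; case: (eqVneq a 0) => [|na]; first by left.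
case: (eqVneq b 0) => [|nb]; first by right.
have [d [s [l [Ss ns Ll Ea]]]] := T_lead_decomp Ta na.
have [e [s' [l' [Ss' ns' Ll' Eb]]]] := T_lead_decomp Tb nb.
have [l'' [Ll'' Ep]] := mul_lead Ss Ss' Ll Ll'.
case/eqP: (lead_mul_neq0 d Ss Ss' ns ns').
apply: (lead_coef_eq0 _ Ll''); first by apply/SM/S_iter_sg.
by rewrite -Ep -Ea -Eb.
Qed.

(* Multiplying by an element of [x]-degree one raises the degree. *)
Lemma deg1_mul_notin_coef lc l0 u t : S lc -> lc != 0 -> S l0 -> S u -> u != 0 -> T t ->
  u != (lc * x + l0) * t.
Proof.
move=> Slc nlc Sl0 Su nu Tt; apply/eqP => E.
have nt : t != 0 by apply: contraNneq nu => t0; rewrite E t0 mulr0.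
have [d [s [l [Ss ns Ll Et]]]] := T_lead_decomp Tt nt.
have [l'' [Ll'' Ep]] := mul_lead (d := 1) Slc Ss (deg_lt_coef (d := 1) Sl0 isT) Ll.
have Lu : deg_lt (1 + d) (- u) by apply/deg_ltN/deg_lt_coef.
case/eqP: (lead_mul_neq0 1 Slc Ss nlc ns).
apply: (lead_coef_eq0 _ (deg_ltD Ll'' Lu)); first by apply/SM/S_iter_sg.
by rewrite addrA -Ep -Et expr1 -E subrr.
Qed.

End OreExtension.

Section GoodearlYakimov.
Variables (K : fieldType) (R : algType K) (x : nat -> R).

Lemma gen_sub_widen k k' r : (k <= k')%N -> gen_sub x k r -> gen_sub x k' r.
Proof.
move=> kk; elim=> [c|j /andP [j1 jk]|a b _ ha _ hb|a b _ ha _ hb].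
- exact: gen_const.
- by apply: gen_var; rewrite j1 (leq_trans jk kk).
- exact: gen_add.
- exact: gen_mul.
Qed.

Lemma gen_sub_zero k : gen_sub x k 0.
Proof. by have := gen_const x k 0; rewrite scale0r. Qed.

Lemma gen_sub_one k : gen_sub x k 1.
Proof. by have := gen_const x k 1; rewrite scale1r. Qed.

Lemma gen_sub_opp k a : gen_sub x k a -> gen_sub x k (- a).
Proof. by move=> h; have := gen_mul (gen_const x k (-1)) h; rewrite scaleN1r mulN1r. Qed.

Lemma gen_sub_exp k i : (1 <= k)%N -> gen_sub x k (x k ^+ i).
Proof.
move=> k1; elim: i => [|i IH]; first by rewrite expr0; apply: gen_sub_one.
by rewrite exprS; apply: gen_mul => //; apply: gen_var; rewrite k1 leqnn.
Qed.

Lemma gen_sub0_scalar r : gen_sub x 0 r -> exists c, r = c%:A.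
Proof.
elim=> [c|j /andP [j1 j0]|a b _ [c ->] _ [c' ->]|a b _ [c ->] _ [c' ->]].
- by exists c.
- by move: (leq_trans j1 j0).
- by exists (c + c'); rewrite scalerDl.
- by exists (c * c'); rewrite mulr_algl scalerA.
Qed.

Lemma gen_sub0_domain a b : gen_sub x 0 a -> gen_sub x 0 b -> a * b = 0 -> a = 0 \/ b = 0.
Proof.
move=> /gen_sub0_scalar [c ->] /gen_sub0_scalar [c' ->]; rewrite mulr_algl scalerA => /eqP.
rewrite scaler_eq0 (negbTE (oner_neq0 R)) orbF mulf_eq0.
by case/orP => /eqP ->; [left | right]; rewrite scale0r.
Qed.

Lemma deg_lt_gen_sub k m t : (1 <= k)%N -> deg_lt (gen_sub x k.-1) (x k) m t -> gen_sub x k t.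
Proof.
move=> k1; move: t; apply: deg_lt_ind => [|a b|r i Sr _]; first exact: gen_sub_zero.
  exact: gen_add.
by apply: gen_mul; [apply: gen_sub_widen Sr; lia | apply: gen_sub_exp].
Qed.

Variables (N n : nat) (sigma delta : nat -> R -> R) (act : ('I_n -> K) -> R -> R).
Hypothesis qnaR : QNA N x sigma delta act.

Lemma qna_ore_step k : (1 <= k <= N)%N ->
  ore_step (gen_sub x k.-1) (gen_sub x k) (x k) (sigma k) (delta k).
Proof. by case: qnaR => _ [/(_ k)]. Qed.

Lemma gen_sub_domain k : (k <= N)%N -> forall a b, gen_sub x k a -> gen_sub x k b ->
  a * b = 0 -> a = 0 \/ b = 0.
Proof.
elim: k => [|k IH] kN; first exact: gen_sub0_domain.
have [[Ssg [sgD [_ [_ [_ [sg_inj _]]]]]] [[Sdl _] [comm [dec free]]]] := qna_ore_step (k := k.+1) kN.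
exact: (ore_domain (gen_sub_zero k) (@gen_add _ _ x k) (@gen_mul _ _ x k)
  Ssg Sdl comm free dec sgD sg_inj (IH (ltnW kN))).
Qed.

Variables (mu : nat -> nat) (y : nat -> R).
Hypothesis gyR : GY_elements N x act mu y.

Lemma gy_prime j : (1 <= j <= N)%N -> prime_elt_in (gen_sub x j) (y j).
Proof.
move=> jN; case: gyR => _ [_ [_ [_ [_ [/(_ j jN) [top _] _]]]]].
have jj : (1 <= j <= j)%N by rewrite (andP jN).1 leqnn.
by case: (top j jj) => // j' /andP [/leq_trans lt /lt]; rewrite ltnn.
Qed.

Lemma gy_gen_sub j : (1 <= j <= N)%N -> gen_sub x j (y j).
Proof. by case/gy_prime => _ [[]]. Qed.

Lemma gy_neq0 j : (1 <= j <= N)%N -> y j != 0.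
Proof. by case/gy_prime. Qed.

(* Either [y_k = x_k] or [y_k = y_(p(k)) x_k - c_k]. *)
Lemma gy_deg1 k : (1 <= k <= N)%N -> exists lc l0,
  [/\ gen_sub x k.-1 lc, lc != 0, gen_sub x k.-1 l0 & y k = lc * x k + l0].
Proof.
move=> kN; case: gyR => _ [_ [_ [y_first [y_next _]]]].
pose P j := [&& (1 <= j)%N, (j < k)%N & mu j == mu k].
have [/existsP [j0 Pj0]|nex] := boolP [exists j : 'I_k, P j].
  have P_le j : P j -> (j <= k)%N by case/and3P => _ /ltnW.
  have [j /and3P [j1 jk /eqP mj] jmax] := ex_maxnP (ex_intro P _ Pj0) P_le.
  have no_between j' : (j < j')%N -> (j' < k)%N -> mu j' <> mu k.
    move=> jj' j'k e; have /jmax : P j' by rewrite /P e eqxx j'k andbT; lia.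
    by rewrite leqNgt jj'.
  have [c [Sc ->]] := y_next k j j1 jk (andP kN).2 mj no_between.
  have jN : (1 <= j <= N)%N by lia.
  exists (y j), (- c); split; [|exact: gy_neq0 | exact: gen_sub_opp | by []].
  by apply: gen_sub_widen (gy_gen_sub jN); lia.
rewrite y_first // => [|j j1 jk e]; last first.
  by case/existsP: nex; exists (Ordinal jk); rewrite /P j1 jk e eqxx.
by exists 1, 0; rewrite mul1r addr0 oner_neq0; split; [apply: gen_sub_one | | apply: gen_sub_zero |].
Qed.

(* [y_k] is prime in [R_k] and cannot divide the nonzero element [y_lo] of [R_(k-1)]. *)
Lemma gy_cap_base lo k r s : (1 <= lo)%N -> (lo < k <= N)%N ->
  gen_sub x k r -> gen_sub x k s -> y lo * r = y k * s ->
  exists t, gen_sub x k t /\ r = y k * t.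
Proof.
move=> lo1 lokN Tr Ts E.
have kN : (1 <= k <= N)%N by lia.
have loN : (1 <= lo <= N)%N by lia.
have Slo : gen_sub x k.-1 (y lo) by apply: gen_sub_widen (gy_gen_sub loN); lia.
have [_ [_ [_ prime_yk]]] := gy_prime kN.
case: (prime_yk (y lo) r) => //; first by apply: gen_sub_widen Slo; lia.
  by exists s.
case=> t [Tt Et]; exfalso.
have [[Ssg [sgD [_ [_ [_ [sg_inj _]]]]]] [[Sdl _] [comm [dec free]]]] := qna_ore_step kN.
have [lc [l0 [Slc nlc Sl0 Eyk]]] := gy_deg1 kN.
have k1N : (k.-1 <= N)%N by lia.
case/eqP: (deg1_mul_notin_coef (gen_sub_zero _) (@gen_add _ _ x _) (@gen_mul _ _ x _)
  (@gen_sub_opp _) Ssg Sdl comm free dec sgD sg_inj (gen_sub_domain k1N)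
  Slc nlc Sl0 Slo (gy_neq0 loN) Tt).
by rewrite -Eyk.
Qed.

Lemma gy_cap lo hi k r s : (1 <= lo)%N -> (lo < hi)%N -> (hi <= k <= N)%N ->
  gen_sub x k r -> gen_sub x k s -> y lo * r = y hi * s ->
  exists t, gen_sub x k t /\ y lo * r = y lo * y hi * t.
Proof.
move=> lo1 lohi; elim: k r s => [|k IH] r s /andP [hik kN]; first by lia.
have [hiE|hik'] := eqVneq hi k.+1.
  subst hi; move=> Tr Ts E; have [|t [Tt ->]] := gy_cap_base lo1 _ Tr Ts E; first by rewrite lohi.
  by exists t; rewrite mulrA.
have kN' : (1 <= k.+1 <= N)%N by lia.
have Slo : gen_sub x k (y lo) by apply: gen_sub_widen (gy_gen_sub (j := lo) _); lia.
have Shi : gen_sub x k (y hi) by apply: gen_sub_widen (gy_gen_sub (j := hi) _); lia.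
have [_ [_ [_ [dec free]]]] := qna_ore_step kN'.
move=> Tr Ts E.
have hikN : (hi <= k <= N)%N by lia.
have [m [t [Lt ->]]] := ore_mulr_cap (gen_sub_zero k) (@gen_add _ _ x k) (@gen_mul _ _ x k)
  (@gen_sub_opp k) free dec Slo Shi (fun r' s' => IH r' s' hikN) Tr Ts E.
by exists t; split => //; exact: (deg_lt_gen_sub (k := k.+1) isT Lt).
Qed.

Lemma gy_mulr_cap i j r s : (1 <= i)%N -> (i < j <= N)%N -> y i * r = y j * s ->
  exists t, y i * r = y i * y j * t.
Proof.
have [R_all _] := qnaR.
move=> i1 /andP [ij jN] E.
have [|t [_ Et]] := gy_cap (k := N) i1 ij _ (R_all r) (R_all s) E; first by rewrite jN leqnn.
by exists t.
Qed.

Lemma gy_mulr_swap i j r : (1 <= i <= N)%N -> (1 <= j <= N)%N ->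
  exists r', y i * y j * r = y j * y i * r'.
Proof.
move=> iN jN; case: gyR => _ [_ [_ [_ [_ [_ /(_ i j iN jN) [alpha [_ ->]]]]]]].
by exists (alpha *: r); rewrite -scalerAl scalerAr.
Qed.

End GoodearlYakimov.

Theorem propositionA2 (K : fieldType) (R : algType K) (N n : nat)
    (x : nat -> R) (sigma delta : nat -> R -> R)
    (act : ('I_n -> K) -> R -> R) (mu : nat -> nat) (y : nat -> R) :
  [pchar K] =i pred0 ->
  QNA N x sigma delta act ->
  GY_elements N x act mu y ->
  forall i j, (1 <= i <= N)%N -> (1 <= j <= N)%N -> i <> j ->
  forall a : R,
    ((exists r, a = y i * r) /\ (exists r, a = y j * r)) <->
    (exists r, a = y i * y j * r).
Proof.
move=> _ qnaR gyR i j iN jN ij a; split; last first.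
  move=> [r ->]; split; first by exists (y j * r); rewrite mulrA.
  have [r' ->] := gy_mulr_swap gyR r iN jN.
  by exists (y i * r'); rewrite mulrA.
move=> [[r ->] [s Es]].
case: (ltngtP i j) => [lt|gt|eq]; last by [].
- have [|t ->] := gy_mulr_cap qnaR gyR (andP iN).1 _ Es; first by rewrite lt (andP jN).2.
  by exists t.
- have [|t Et] := gy_mulr_cap qnaR gyR (andP jN).1 _ (esym Es); first by rewrite gt (andP iN).2.
  have [t' Et'] := gy_mulr_swap gyR t jN iN.
  by exists t'; rewrite Es Et Et'.
Qed.
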